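(* Let $\alpha<\omega_1$, $K\ge1$, $X\subseteq W$ a block subspace and $(z_n)$ a block sequence in $W$ such that II has a strategy in $G^\alpha_X$ to play $(y_0,\dots,y_k)$ satisfying $(y_0,\dots,y_k)\sim_K(z_0,\dots,z_k)$. Then for every block subspace $Y\subseteq X$, ${\rm rank}\big(T((z_n),Y,K)\big)>\alpha$.
   Context: Let $\mathcal W$ be a real Banach space with Schauder basis $(e_n)$. Fix a countable subfield $\mathfrak F\subseteq\mathbb R$ such that $\|\sum_{n\le m}a_ne_n\|\in\mathfrak F$ whenever all $a_n\in\mathfrak F$, and let $W$ be the $\mathfrak F$-vector space of finite $\mathfrak F$-linear combinations of the $e_n$, with the norm of $\mathcal W$; subspaces are $\mathfrak F$-linear in $W$. For nonzero $x=\sum a_ne_n$, ${\rm supp}(x)=\{n:a_n\neq0\}$, and $x<y$ means $\max{\rm supp}(x)<\min{\rm supp}(y)$. A block sequence is a sequence of nonzero vectors $x_0<x_1<\dots$; a block subspace is the span of an infinite block sequence. $(x_i)_{i\le k}\sim_K(y_i)_{i\le k}$ means $\frac1K\|\sum a_ix_i\|\le\|\sum a_iy_i\|\le K\|\sum a_ix_i\|$ for all real $a_i$. $T((z_n),Y,K)$ is the tree of all finite sequences $(y_0,\dots,y_k)$ of vectors of $Y$, including the empty one, with $(y_0,\dots,y_k)\sim_K(z_0,\dots,z_k)$. For a well-founded tree $T$, $\rho_T(s)=\sup\{\rho_T(t)+1:s\prec t\in T\}$ ($0$ at terminal nodes) and ${\rm rank}(T)=\sup\{\rho_T(s)+1:s\in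 T\}$; ill-founded trees have rank $\infty$, with $\beta<\infty$ for every ordinal $\beta$. Game $G^\alpha_X$: in rounds $l=0,1,\dots$, I plays a block subspace $Y_l\subseteq X$ and an ordinal $\xi_l$ with $\xi_0<\alpha$ and $\xi_l<\xi_{l-1}$ for $l\ge1$; II plays a finite-dimensional subspace $F_l\subseteq Y_l$ and a nonzero $y_l\in F_0+\dots+F_l$; the game ends after II's response in the round $k$ with $\xi_k=0$ (immediately with empty outcome if $\alpha=0$); outcome $(y_0,\dots,y_k)$. ''II has a strategy to play ... satisfying P'' means II can ensure the outcome satisfies P. *)

From HB Require Import structures.
From mathcomp Require Import all_boot all_order all_algebra.
From mathcomp Require Import all_classical all_reals all_analysis.
Set Implicit Arguments. Unset Strict Implicit. Unset Printing Implicit Defensive.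
Import Order.TTheory GRing.Theory Num.Theory.
Import numFieldNormedType.Exports.
Local Open Scope classical_set_scope.
Local Open Scope ring_scope.

(* Every Brouwer tree denotes a countable ordinal (OL f = sup_n f n), and every
   countable ordinal (alpha < omega_1) is denoted by some tree. *)
Inductive Ord : Type :=
| OZ : Ord
| OS : Ord -> Ord
| OL : (nat -> Ord) -> Ord.

Inductive ole : Ord -> Ord -> Prop :=
| ole_zero : forall b, ole OZ b
| ole_succ : forall a b, ole a b -> ole (OS a) (OS b)
| ole_limr : forall a f n, ole a (f n) -> ole a (OL f)
| ole_liml : forall f b, (forall n, ole (f n) b) -> ole (OL f) b.

Definition olt (a b : Ord) : Prop := ole (OS a) b.
Definition ozero (a : Ord) : Prop := ole a OZ.

(* rho_ge T a s  <->  rho_T(s) >= a  (with rho_T(s) = infinity allowed),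
   by recursion on a:  rho(s) >= b+1 iff some proper extension t of s in T has
   rho(t) >= b ;  rho(s) >= sup_n f n iff rho(s) >= f n for all n. *)
Fixpoint rho_ge {A : Type} (T : seq A -> Prop) (a : Ord) (s : seq A) : Prop :=
  match a with
  | OZ => True
  | OS b => exists u : seq A, u <> [::] /\ T (s ++ u) /\ rho_ge T b (s ++ u)
  | OL f => forall n, rho_ge T (f n) s
  end.

(* rank(T) = sup {rho_T(s)+1 : s in T} > a   iff   some s in T has rho_T(s) >= a *)
Definition rank_gt {A : Type} (T : seq A -> Prop) (a : Ord) : Prop :=
  exists s, T s /\ rho_ge T a s.

Section Space.
Variables (R : realType) (V : completeNormedModType R) (e : nat -> V) (F : set R).

Definition expansion (x : V) (a : nat -> R) : Prop :=
  (fun m : nat => \sum_(n < m) a n *: e n) @ \oo --> x.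

Definition schauder_basis : Prop := forall x : V, exists! a, expansion x a.

Definition subfield_of_R : Prop :=
  F 0 /\ F 1 /\ (forall x y, F x -> F y -> F (x + y)) /\ (forall x, F x -> F (- x)) /\
  (forall x y, F x -> F y -> F (x * y)) /\ (forall x, F x -> x != 0 -> F x^-1).

Definition norm_closed : Prop :=
  forall (m : nat) (a : nat -> R), (forall n, F (a n)) ->
    F `|\sum_(n < m.+1) a n *: e n|.

Definition inW (x : V) : Prop :=
  exists (m : nat) (a : nat -> R), (forall n, F (a n)) /\ x = \sum_(n < m) a n *: e n.

Definition in_supp (x : V) (n : nat) : Prop := exists a, expansion x a /\ a n != 0.

Definition blt (x y : V) : Prop :=
  forall m n, in_supp x m -> in_supp y n -> (m < n)%N.

Definition block_seq (x : nat -> V) : Prop :=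
  forall n, inW (x n) /\ x n != 0 /\ blt (x n) (x n.+1).

Definition Fspan_inf (x : nat -> V) : set V :=
  [set v | exists (n : nat) (c : nat -> R), (forall i, F (c i)) /\
           v = \sum_(i < n) c i *: x i].

Definition block_subspace (Y : set V) : Prop :=
  exists x, block_seq x /\ Y = Fspan_inf x.

Definition Fspan (s : seq V) : set V :=
  [set v | exists c : nat -> R, (forall i, F (c i)) /\
           v = \sum_(i < size s) c i *: nth 0 s i].

Definition fd_subspace (G : set V) : Prop :=
  exists s : seq V, (forall i, (i < size s)%N -> inW (nth 0 s i)) /\ G = Fspan s.

Definition sum_sp (Gs : seq (set V)) : set V :=
  [set v | exists vs : nat -> V, (forall j, (j < size Gs)%N -> nth set0 Gs j (vs j)) /\
           v = \sum_(j < size Gs) vs j].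

Definition seq_equiv (K : R) (ys : seq V) (z : nat -> V) : Prop :=
  forall a : nat -> R,
    K^-1 * `|\sum_(i < size ys) a i *: nth 0 ys i| <= `|\sum_(i < size ys) a i *: z i| /\
    `|\sum_(i < size ys) a i *: z i| <= K * `|\sum_(i < size ys) a i *: nth 0 ys i|.

Definition Ttree (z : nat -> V) (Y : set V) (K : R) : seq V -> Prop :=
  fun s => (forall i, (i < size s)%N -> Y (nth 0 s i)) /\ seq_equiv K s z.

Definition Imove := (set V * Ord)%type.
Definition Imove0 : Imove := (set0, OZ).

(* h = ((Y_0,xi_0),...,(Y_l,xi_l)) is a legal (partial) sequence of moves of I,
   the game not having ended before round l *)
Definition legal_I (X : set V) (alpha : Ord) (h : seq Imove) : Prop :=
  forall j, (j < size h)%N ->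
    let m := nth Imove0 h j in
    [/\ block_subspace m.1, m.1 `<=` X,
        (j = 0%N -> olt m.2 alpha),
        ((0 < j)%N -> olt m.2 (nth Imove0 h j.-1).2) &
        ((j.+1 < size h)%N -> ~ ozero m.2)].

(* II has a strategy in G^alpha_X to play an outcome satisfying P.
   A strategy maps the moves of I so far to II's answer (F_l, y_l). *)
Definition II_has_strategy (X : set V) (alpha : Ord) (P : seq V -> Prop) : Prop :=
  exists sigma : seq Imove -> (set V * V),
    forall h : seq Imove, legal_I X alpha h -> (0 < size h)%N ->
      let l := (size h).-1 in
      let resp j := sigma (take j.+1 h) in
      [/\ fd_subspace (sigma h).1,
          (sigma h).1 `<=` (nth Imove0 h l).1,
          (sigma h).2 != 0 &
          sum_sp [seq (resp j).1 | j <- iota 0 (size h)] (sigma h).2] /\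
      (ozero (nth Imove0 h l).2 ->
         P [seq (resp j).2 | j <- iota 0 (size h)]).

End Space.

From HB Require Import structures.
From mathcomp Require Import all_boot all_order all_algebra.
From mathcomp Require Import all_classical all_reals all_analysis.
From Stdlib Require Import Classical.
Import Order.TTheory GRing.Theory Num.Theory.
Import numFieldNormedType.Exports.
Local Open Scope classical_set_scope.
Local Open Scope ring_scope.
Set Implicit Arguments. Unset Strict Implicit.

(* Let I play the block subspace Y in every round.  By induction on b: if a
   legal position made of such moves still allows I any ordinal below a bound
   >= b, then II's answers so far form a node of T of rank >= b.  Indeed, I
   plays (Y, c) with c < b, and II's answer extends the node; it lies in Y
   because every F_l is contained in Y_l = Y.  The extended node satisfies
   ~_K because I could end the game in the following round with ordinal 0, and
   ~_K passes to initial segments.  Starting from the empty position, the root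
   has rank >= alpha, i.e. rank(T) > alpha.  Nothing about the Schauder basis,
   the countability of the field, K >= 1 or (z_n) being a block sequence is
   needed. *)

Lemma ole_refl a : ole a a.
Proof.
elim: a => [|a IH|f IH]; first exact: ole_zero.
  exact: ole_succ.
by apply: ole_liml => n; apply: (@ole_limr _ f n).
Qed.

Lemma ole_lim_inv f n b : ole (OL f) b -> ole (f n) b.
Proof.
move=> h; remember (OL f) as o eqn:Ho; move: Ho; elim: h => //.
- by move=> a g m _ IH Ha; apply: (@ole_limr _ g m); apply: IH.
- by move=> g b' H _ [<-].
Qed.

Lemma olt_nonzero a b : olt a b -> ~ ozero b.
Proof.
rewrite /olt /ozero => + hb; remember OZ as o eqn:Ho; move: Ho.
elim: hb => // [b' _ h|g b' _ IH Hb h]; inversion h; subst => //.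
exact: (IH n erefl).
Qed.

Lemma nonzero_olt0 b : ~ ozero b -> olt OZ b.
Proof.
rewrite /ozero /olt; elim: b => [|b _|f IH] hb.
- by case: hb; apply: ole_zero.
- by apply: ole_succ; apply: ole_zero.
- have [n hn] : exists n, ~ ole (f n) OZ.
    apply: NNPP => hc; apply: hb; apply: ole_liml => n.
    by apply: NNPP => hn; apply: hc; exists n.
  by apply: (@ole_limr _ f n); apply: IH.
Qed.

Lemma sum_scale_widen (R : nzRingType) (V : lmodType R) (n m : nat)
    (c : nat -> R) (x : nat -> V) : (n <= m)%N ->
  \sum_(i < n) c i *: x i = \sum_(i < m) (if (i < n)%N then c i else 0) *: x i.
Proof.
move=> le_nm; rewrite (big_ord_widen m (fun i => c i *: x i)) // big_mkcond.
by apply: eq_bigr => i _; case: ifP; rewrite ?scale0r.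
Qed.

Section BlockSubspace.
Variables (R : realType) (V : completeNormedModType R) (e : nat -> V) (F : set R).
Hypothesis hF : subfield_of_R F.

Lemma Fspan_inf0 (x : nat -> V) : Fspan_inf F x 0.
Proof.
exists 0%N, (fun _ => 0); rewrite big_ord0; split=> //.
by case: hF.
Qed.

Lemma Fspan_infD (x : nat -> V) u v :
  Fspan_inf F x u -> Fspan_inf F x v -> Fspan_inf F x (u + v).
Proof.
have [F0 [_ [FD _]]] := hF.
move=> [n1 [c1 [Fc1 ->]]] [n2 [c2 [Fc2 ->]]].
pose pad (c : nat -> R) n i := if (i < n)%N then c i else 0.
exists (n1 + n2)%N, (fun i => pad c1 n1 i + pad c2 n2 i); split.
  by move=> i; apply: FD; rewrite /pad; case: ifP.
rewrite (sum_scale_widen _ _ (leq_addr n2 n1)).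
rewrite (sum_scale_widen _ _ (leq_addl n1 n2)) -big_split /=.
by apply: eq_bigr => i _; rewrite scalerDl.
Qed.

Lemma block_subspace_sum_sp (Y : set V) (Gs : seq (set V)) v :
  block_subspace e F Y -> (forall j, (j < size Gs)%N -> nth set0 Gs j `<=` Y) ->
  sum_sp Gs v -> Y v.
Proof.
move=> [x [_ ->]] GsY [vs [Gs_vs ->]].
apply: (big_ind (Fspan_inf F x)) => [||i _]; first exact: Fspan_inf0.
  exact: Fspan_infD.
exact: GsY (ltn_ord i) _ (Gs_vs _ (ltn_ord i)).
Qed.

End BlockSubspace.

Lemma seq_equiv_rcons (R : realType) (V : completeNormedModType R) (K : R)
    (s : seq V) y (z : nat -> V) :
  seq_equiv K (rcons s y) z -> seq_equiv K s z.
Proof.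
move=> equiv_sy a.
have := equiv_sy (fun i => if (i < size s)%N then a i else 0).
rewrite size_rcons !big_ord_recr /= ltnn !scale0r !addr0.
have -> : \sum_(i < size s) (if (i < size s)%N then a i else 0) *: nth 0 (rcons s y) i
   = \sum_(i < size s) a i *: nth 0 s i.
  by apply: eq_bigr => i _; rewrite ltn_ord nth_rcons ltn_ord.
have -> // : \sum_(i < size s) (if (i < size s)%N then a i else 0) *: z i
   = \sum_(i < size s) a i *: z i.
by apply: eq_bigr => i _; rewrite ltn_ord.
Qed.

Definition tree_in (R : realType) (V : completeNormedModType R) (Y : set V)
    (P : seq V -> Prop) (s : seq V) : Prop :=
  (forall i, (i < size s)%N -> Y (nth 0 s i)) /\ P s.

Section Game.
Variables (R : realType) (V : completeNormedModType R) (e : nat -> V) (F : set R).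
Hypothesis hF : subfield_of_R F.
Variables (X : set V) (alpha : Ord).

Local Notation Imove := (Imove (R:=R) V).
Local Notation Imove0 := (Imove0 (R:=R) V).
Local Notation legal := (legal_I e F X alpha).

Definition II_strategy (P : seq V -> Prop) (sigma : seq Imove -> set V * V) : Prop :=
  forall h : seq Imove, legal h -> (0 < size h)%N ->
    let l := (size h).-1 in
    let resp j := sigma (take j.+1 h) in
    [/\ fd_subspace e F (sigma h).1,
        (sigma h).1 `<=` (nth Imove0 h l).1,
        (sigma h).2 != 0 &
        sum_sp [seq (resp j).1 | j <- iota 0 (size h)] (sigma h).2] /\
    (ozero (nth Imove0 h l).2 -> P [seq (resp j).2 | j <- iota 0 (size h)]).

Definition outcome (sigma : seq Imove -> set V * V) (h : seq Imove) : seq V :=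
  [seq (sigma (take j.+1 h)).2 | j <- iota 0 (size h)].

Lemma outcome_rcons sigma h m :
  outcome sigma (rcons h m) = rcons (outcome sigma h) (sigma (rcons h m)).2.
Proof.
rewrite /outcome size_rcons -addn1 iotaD add0n map_cat /= cats1.
rewrite take_oversize ?size_rcons ?addn1 //; congr rcons.
apply/eq_in_map => j; rewrite mem_iota add0n => /andP[_ lt_jh].
by rewrite -cats1 takel_cat.
Qed.

Definition ord_bound (h : seq Imove) : Ord :=
  if h is [::] then alpha else (last Imove0 h).2.

Lemma ord_bound_rcons h m : ord_bound (rcons h m) = m.2.
Proof. by case: h => [|m' h] /=; rewrite ?last_rcons. Qed.

Lemma ord_bound_nth h : (0 < size h)%N -> (nth Imove0 h (size h).-1).2 = ord_bound h.
Proof. by case: h => // m h _; rewrite nth_last. Qed.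

Lemma legal_take h n : legal h -> legal (take n h).
Proof.
move=> hl j; rewrite size_take_min leq_min => /andP[lt_jn lt_jh].
have := hl j lt_jh; rewrite /= !nth_take //; last exact: leq_ltn_trans (leq_pred j) lt_jn.
case=> ? ? ? ? nonzero_j; split=> // lt_j1; apply: nonzero_j.
exact: leq_trans lt_j1 (geq_minr _ _).
Qed.

Lemma legal_rcons h (Y : set V) c : legal h -> block_subspace e F Y -> Y `<=` X ->
  olt c (ord_bound h) -> legal (rcons h (Y, c)).
Proof.
move=> hl hY hYX hc j; rewrite size_rcons ltnS leq_eqVlt /= !nth_rcons.
case/orP=> [/eqP ->|lt_jh]; rewrite ?ltnn ?eqxx.
  split=> //= [/size0nil h0|h_pos]; first by move: hc; rewrite h0.
  by rewrite ltn_predL h_pos ord_bound_nth.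
rewrite lt_jh; have [? ? ? desc_j nonzero_j] := hl j lt_jh; split=> // [j_pos|].
  by rewrite (leq_ltn_trans (leq_pred j) lt_jh); apply: desc_j.
rewrite ltnS leq_eqVlt => /orP[/eqP size_h|]; last exact: nonzero_j.
rewrite -[j]/(j.+1.-1) size_h ord_bound_nth -?size_h //.
exact: olt_nonzero hc.
Qed.

Section Strategy.
Variables (Y : set V) (P : seq V -> Prop) (sigma : seq Imove -> set V * V).
Hypotheses (hY : block_subspace e F Y) (hYX : Y `<=` X).
Hypothesis P_rcons : forall s y, P (rcons s y) -> P s.
Hypothesis hsigma : II_strategy P sigma.

Local Notation play_in cs := [seq (Y, c) | c : Ord <- cs].

Lemma answer_in cs : legal (play_in cs) -> (0 < size cs)%N -> Y (sigma (play_in cs)).2.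
Proof.
move=> hl hs; have := hsigma hl; rewrite size_map => /(_ hs) [[_ _ _ hsum] _].
apply: (block_subspace_sum_sp hF hY _ hsum).
rewrite !size_map size_iota => j lt_jcs.
rewrite (nth_map 0%N) ?size_iota ?size_map // nth_iota ?size_map // add0n -map_take.
have lt_jt : (j < size (take j.+1 cs))%N by rewrite size_takel.
have hl' : legal (play_in (take j.+1 cs)) by rewrite map_take; apply: legal_take.
have := hsigma hl'; rewrite size_map size_takel // => /(_ isT) [[_ hsub _ _] _].
by move: hsub; rewrite (nth_map OZ).
Qed.

Lemma outcome_in cs : legal (play_in cs) ->
  forall i, (i < size (outcome sigma (play_in cs)))%N ->
    Y (nth 0 (outcome sigma (play_in cs)) i).
Proof.
move=> hl i; rewrite !size_map size_iota => lt_ics.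
rewrite (nth_map 0%N) ?size_iota ?size_map // nth_iota ?size_map // add0n -map_take.
by apply: answer_in; rewrite ?map_take ?size_takel //; apply: legal_take.
Qed.

Lemma outcome_P cs : legal (play_in cs) -> (0 < size cs)%N ->
  P (outcome sigma (play_in cs)).
Proof.
rewrite -(size_map (pair Y)) => hl hs; have [_ win] := hsigma hl hs.
have [zero|nz] := classic (ozero (ord_bound (play_in cs))).
  by apply: win; rewrite ord_bound_nth.
have hl' : legal (rcons (play_in cs) (Y, OZ)).
  by apply: legal_rcons => //; apply: nonzero_olt0.
have hs' : (0 < size (rcons (play_in cs) (Y, OZ)))%N by rewrite size_rcons.
have [_ win'] := hsigma hl' hs'.
apply: (@P_rcons _ (sigma (rcons (play_in cs) (Y, OZ))).2).
rewrite -outcome_rcons; apply: win'.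
by rewrite ord_bound_nth ?size_rcons // ord_bound_rcons; apply: ole_zero.
Qed.

Lemma rho_ge_outcome b cs : legal (play_in cs) -> ole b (ord_bound (play_in cs)) ->
  rho_ge (tree_in Y P) b (outcome sigma (play_in cs)).
Proof.
elim: b cs => [//|c IH|f IH] cs hl hb /=; last first.
  by move=> n; apply: IH => //; apply: ole_lim_inv hb.
have hl' : legal (play_in (rcons cs c)) by rewrite map_rcons; apply: legal_rcons.
have grow : outcome sigma (play_in (rcons cs c))
    = rcons (outcome sigma (play_in cs)) (sigma (play_in (rcons cs c))).2.
  by rewrite map_rcons outcome_rcons.
exists [:: (sigma (play_in (rcons cs c))).2]; rewrite cats1 -grow; split=> //; split.
  by split; [apply: outcome_in | apply: outcome_P; rewrite ?size_rcons].
by apply: IH => //; rewrite map_rcons ord_bound_rcons; apply: ole_refl.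
Qed.

End Strategy.

Lemma rho_ge_strategy (Y : set V) (P : seq V -> Prop) :
  block_subspace e F Y -> Y `<=` X -> (forall s y, P (rcons s y) -> P s) ->
  II_has_strategy e F X alpha P -> rho_ge (tree_in Y P) alpha [::].
Proof.
move=> hY hYX P_rcons [sigma hsigma].
by apply: (rho_ge_outcome hY hYX P_rcons hsigma (cs := [::])) => //; apply: ole_refl.
Qed.

End Game.

Theorem lemma4p8 (R : realType) (V : completeNormedModType R) (e : nat -> V)
  (F : set R)
  (he : schauder_basis e) (hFc : countable F) (hF : subfield_of_R F)
  (hnorm : norm_closed e F)
  (alpha : Ord) (K : R) (hK : 1 <= K) (X : set V)
  (hX : block_subspace e F X) (z : nat -> V) (hz : block_seq e F z) :
  II_has_strategy e F X alpha (fun ys => seq_equiv K ys z) ->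
  forall Y : set V, block_subspace e F Y -> Y `<=` X ->
    rank_gt (Ttree z Y K) alpha.
Proof.
move=> hII Y hY hYX; exists [::]; split.
  by split=> // a; rewrite !big_ord0 normr0 !mulr0.
exact: (rho_ge_strategy hF hY hYX (fun s y => @seq_equiv_rcons R V K s y z) hII).
Qed.
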